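(* Let $0<q<1$. For $0<m<1$ put $a=(1-m)/q$ and define the discrete measure $$W(m,du)=\sum_{n=0}^\infty w(m,q^n)\frac{q^n}{(q;q)_n}\delta_{q^n}(du),\qquad w(m,q^n)=a^n(aq;q)_\infty.$$ Then $W(m,\cdot)$ is a probability measure with mean $m$ and variance $(1-q)m(1-m)$, and for every $n\ge0$, with $u=q^n$, $$\widetilde{D}_{q,m}w(m,u)=\frac{u-m}{(1-q)m(1-m)}\,w(m,u),\qquad 0<m<1.$$
   Context: $(x;q)_n=\prod_{k=0}^{n-1}(1-xq^k)$, $(x;q)_\infty=\prod_{k\ge0}(1-xq^k)$. The Hahn operator centered at $1$ is $(\widetilde{D}_{q,x}f)(x)=\frac{f(x)-f(qx+1-q)}{(1-q)(x-1)}$ for $x\ne1$. $\delta_b$ is the unit point mass at $b$. *)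

From Stdlib Require Import Reals.
From Coquelicot Require Import Coquelicot.
Open Scope R_scope.

Fixpoint qpoch (x q : R) (n : nat) : R :=
  match n with
  | O => 1
  | S k => qpoch x q k * (1 - x * q ^ k)
  end.

Definition qpoch_inf (x q : R) : R := real (Lim_seq (fun n => qpoch x q n)).

Definition hahnD (q : R) (f : R -> R) (x : R) : R :=
  (f x - f (q * x + 1 - q)) / ((1 - q) * (x - 1)).

Definition a_par (q m : R) : R := (1 - m) / q.

Definition w (q m : R) (n : nat) : R :=
  a_par q m ^ n * qpoch_inf (a_par q m * q) q.

(* mass of W(m, .) at the atom q^n : w(m,q^n) q^n / (q;q)_n *)
Definition Wmass (q m : R) (n : nat) : R :=
  w q m n * q ^ n / qpoch q q n.

(* The mass of W(m,.) at q^n is z^n / ((q;q)_n E(z)), where z = 1 - m = a q and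
   E(z) = sum_n z^n / (q;q)_n is the q-exponential. Comparing coefficients gives
   E(z) - E(q z) = z E(z); iterating, E(q^k z) = (z;q)_k E(z), and since E(q^k z) -> 1
   this identifies (z;q)_oo with 1 / E(z). Hence the q^(k n)-moment of W(m,.) is
   (1 - m; q)_k: for k = 0, 1, 2 this is 1, m and m (1 - q (1 - m)), which gives the
   total mass, the mean and the variance. For the Hahn derivative, replacing m by
   q m + 1 - q replaces z by q z, and E(q z) = m E(z). *)

From Stdlib Require Import Reals Lra.
From Coquelicot Require Import Coquelicot.
Open Scope R_scope.

Section QExponential.

Variable q : R.
Hypothesis Hq : 0 < q < 1.

Lemma pow_q_bounds (n : nat) : 0 < q ^ n <= 1.
Proof.
  induction n as [|n IH]; simpl; [lra|].
  split; [apply Rmult_lt_0_compat|]; nra.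
Qed.

Lemma pow_q_S_lt1 (n : nat) : q ^ S n < 1.
Proof. pose proof (pow_q_bounds n); simpl; nra. Qed.

Lemma qpoch_pos (x : R) (n : nat) : x < 1 -> 0 < qpoch x q n.
Proof.
  intros Hx; induction n as [|n IH]; simpl; [lra|].
  pose proof (pow_q_bounds n); apply Rmult_lt_0_compat; nra.
Qed.

Definition qexp_term (z : R) (n : nat) : R := z ^ n / qpoch q q n.
Definition qexp (z : R) : R := Series (qexp_term z).

Lemma qexp_term0 (z : R) : qexp_term z 0 = 1.
Proof. unfold qexp_term; simpl; field. Qed.

Lemma qexp_term_pos (z : R) (n : nat) : 0 < z -> 0 < qexp_term z n.
Proof.
  intros Hz; apply Rdiv_lt_0_compat; [apply pow_lt | apply qpoch_pos]; lra.
Qed.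

Lemma qexp_term_S (z : R) (n : nat) :
  qexp_term z (S n) = z / (1 - q ^ S n) * qexp_term z n.
Proof.
  pose proof (pow_q_S_lt1 n); pose proof (qpoch_pos q n (proj2 Hq)).
  unfold qexp_term; simpl in *; field; repeat split; lra.
Qed.

Lemma ex_series_qexp (z : R) : 0 < z < 1 -> ex_series (qexp_term z).
Proof.
  intros Hz; apply ex_series_Rabs, (ex_series_DAlembert _ z); [lra| |].
  - intros n; apply Rgt_not_eq, qexp_term_pos; lra.
  - apply is_lim_seq_ext with (fun n => z * / (1 - q ^ S n)).
    + intros n; pose proof (pow_q_S_lt1 n); pose proof (qexp_term_pos z n (proj1 Hz)).
      rewrite qexp_term_S.
      replace (z / (1 - q ^ S n) * qexp_term z n / qexp_term z n) with (z / (1 - q ^ S n))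
        by (field; repeat split; lra).
      rewrite Rabs_right; [field; lra|].
      apply Rle_ge, Rlt_le, Rdiv_lt_0_compat; lra.
    + replace (Finite z) with (Rbar_mult z (Rbar_inv (1 - 0)))
        by (simpl; f_equal; field).
      apply is_lim_seq_scal_l, is_lim_seq_inv; [|simpl; intro H; injection H; lra].
      apply is_lim_seq_minus'; [apply is_lim_seq_const|].
      apply (is_lim_seq_incr_1 (fun n => q ^ n)), is_lim_seq_geom.
      rewrite Rabs_right; lra.
Qed.

Lemma is_series_qexp (z : R) : 0 < z < 1 -> is_series (qexp_term z) (qexp z).
Proof. intros Hz; apply Series_correct, ex_series_qexp, Hz. Qed.

(* The (n+1)-th coefficient of E(z) - E(q z) is z times the n-th coefficient of E(z). *)
Lemma qexp_q_shift (z : R) : 0 < z < 1 -> qexp (q * z) = (1 - z) * qexp z.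
Proof.
  intros Hz; pose proof (is_series_qexp z Hz) as HE.
  assert (Hdiff : is_series (fun n => qexp_term z n - qexp_term (q * z) n) (z * qexp z)).
  { apply is_series_decr_1.
    replace (plus _ _) with (z * qexp z)
      by (rewrite !qexp_term0; unfold plus, opp; simpl; ring).
    apply (is_series_ext (fun n => z * qexp_term z n)); [|exact (is_series_scal_l z _ _ HE)].
    intros n; pose proof (pow_q_S_lt1 n); pose proof (qpoch_pos q n (proj2 Hq)).
    unfold qexp_term; rewrite Rpow_mult_distr; simpl in *; field; repeat split; lra. }
  apply is_series_unique.
  apply (is_series_ext (fun n => qexp_term z n - (qexp_term z n - qexp_term (q * z) n)));
    [intros n; lra|].
  replace ((1 - z) * qexp z) with (qexp z - z * qexp z) by ring.
  exact (is_series_minus _ _ _ _ HE Hdiff).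
Qed.

Lemma qexp_qpow_shift (z : R) (k : nat) :
  0 < z < 1 -> qexp (q ^ k * z) = qpoch z q k * qexp z.
Proof.
  intros Hz; induction k as [|k IH]; [simpl; rewrite Rmult_1_l; ring|].
  pose proof (pow_q_bounds k).
  replace (q ^ S k * z) with (q * (q ^ k * z)) by (simpl; ring).
  rewrite qexp_q_shift, IH by nra; simpl; ring.
Qed.

Lemma is_series_qexp_tail (z : R) : 0 < z < 1 ->
  is_series (fun n => qexp_term z (S n)) (qexp z - 1).
Proof.
  intros Hz; apply is_series_incr_1.
  rewrite qexp_term0, Rplus_comm, Rplus_minus; apply is_series_qexp, Hz.
Qed.

(* Termwise, the tail of E(y) is dominated by y/z times the tail of E(z). *)
Lemma qexp_bounds (y z : R) : 0 < y <= z -> z < 1 ->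
  1 <= qexp y <= 1 + y / z * (qexp z - 1).
Proof.
  intros Hy Hz.
  pose proof (is_series_qexp_tail y ltac:(lra)) as Hty.
  pose proof (is_series_qexp_tail z ltac:(lra)) as Htz.
  assert (Hle : forall n, 0 <= qexp_term y (S n) <= y / z * qexp_term z (S n)).
  { intros n; pose proof (qexp_term_pos y (S n) (proj1 Hy)); split; [lra|].
    pose proof (pow_incr y z n ltac:(lra)); pose proof (qpoch_pos q (S n) (proj2 Hq)).
    unfold qexp_term; replace (y / z * (z ^ S n / qpoch q q (S n)))
      with (y * z ^ n / qpoch q q (S n)) by (rewrite <- tech_pow_Rmult; field; lra).
    rewrite <- tech_pow_Rmult; unfold Rdiv.
    apply Rmult_le_compat_r; [apply Rlt_le, Rinv_0_lt_compat; lra|].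
    apply Rmult_le_compat_l; lra. }
  split.
  - assert (Hpos : Series (fun n => 0 * qexp_term y (S n))
                   <= Series (fun n => qexp_term y (S n))).
    { apply Series_le; [intros n; pose proof (Hle n); lra | exists (qexp y - 1); exact Hty]. }
    rewrite Series_scal_l, (is_series_unique _ _ Hty) in Hpos; lra.
  - assert (Hdom : Series (fun n => qexp_term y (S n))
                   <= Series (fun n => y / z * qexp_term z (S n))).
    { apply Series_le; [exact Hle|].
      exists (y / z * (qexp z - 1)); exact (is_series_scal_l _ _ _ Htz). }
    rewrite Series_scal_l, (is_series_unique _ _ Hty), (is_series_unique _ _ Htz) in Hdom.
    lra.
Qed.

Lemma qexp_ge1 (z : R) : 0 < z < 1 -> 1 <= qexp z.
Proof. intros Hz; apply (qexp_bounds z z); lra. Qed.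

Lemma is_lim_seq_qexp_qpow (z : R) : 0 < z < 1 ->
  is_lim_seq (fun k => qexp (q ^ k * z)) 1.
Proof.
  intros Hz.
  apply is_lim_seq_le_le with (fun _ => 1) (fun k => 1 + q ^ k * (qexp z - 1)).
  - intros k; pose proof (pow_q_bounds k).
    pose proof (qexp_bounds (q ^ k * z) z ltac:(nra) ltac:(lra)).
    replace (q ^ k * z / z) with (q ^ k) in * by (field; repeat split; lra); lra.
  - apply is_lim_seq_const.
  - replace (Finite 1) with (Finite (1 + 0 * (qexp z - 1))) by (f_equal; ring).
    apply is_lim_seq_plus'; [apply is_lim_seq_const|].
    apply is_lim_seq_mult'; [|apply is_lim_seq_const].
    apply is_lim_seq_geom; rewrite Rabs_right; lra.
Qed.

Lemma qpoch_inf_qexp (z : R) : 0 < z < 1 -> qpoch_inf z q = / qexp z.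
Proof.
  intros Hz; pose proof (qexp_ge1 z Hz).
  unfold qpoch_inf; rewrite (is_lim_seq_unique _ (/ qexp z)); [reflexivity|].
  apply is_lim_seq_ext with (fun k => / qexp z * qexp (q ^ k * z)).
  - intros k; rewrite qexp_qpow_shift by exact Hz; field; repeat split; lra.
  - replace (Finite (/ qexp z)) with (Rbar_mult (/ qexp z) 1) by (simpl; f_equal; ring).
    apply is_lim_seq_scal_l, is_lim_seq_qexp_qpow, Hz.
Qed.

End QExponential.

Section WMeasure.

Variable q : R.
Hypothesis Hq : 0 < q < 1.

Lemma w_qexp (m : R) (n : nat) :
  0 < m < 1 -> w q m n = ((1 - m) / q) ^ n / qexp q (1 - m).
Proof.
  intros Hm; pose proof (qexp_ge1 q Hq (1 - m) ltac:(lra)).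
  unfold w, a_par; replace ((1 - m) / q * q) with (1 - m) by (field; lra).
  rewrite qpoch_inf_qexp by lra; field; lra.
Qed.

Variable m : R.
Hypothesis Hm : 0 < m < 1.

Lemma Wmass_qexp (n : nat) : Wmass q m n = qexp_term q (1 - m) n / qexp q (1 - m).
Proof.
  pose proof (qexp_ge1 q Hq (1 - m) ltac:(lra)).
  pose proof (qpoch_pos q Hq q n (proj2 Hq)); pose proof (pow_q_bounds q Hq n).
  unfold Wmass, qexp_term; rewrite w_qexp by exact Hm.
  unfold Rdiv; rewrite Rpow_mult_distr, pow_inv; field; repeat split; lra.
Qed.

Lemma Wmass_nonneg (n : nat) : 0 <= Wmass q m n.
Proof.
  pose proof (qexp_ge1 q Hq (1 - m) ltac:(lra)).
  pose proof (qexp_term_pos q Hq (1 - m) n ltac:(lra)).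
  rewrite Wmass_qexp; apply Rlt_le, Rdiv_lt_0_compat; lra.
Qed.

Lemma is_series_Wmass_qpow_moment (k : nat) :
  is_series (fun n => Wmass q m n * (q ^ n) ^ k) (qpoch (1 - m) q k).
Proof.
  pose proof (qexp_ge1 q Hq (1 - m) ltac:(lra)); pose proof (pow_q_bounds q Hq k).
  assert (Hterm : forall n, / qexp q (1 - m) * qexp_term q (q ^ k * (1 - m)) n
                           = Wmass q m n * (q ^ n) ^ k).
  { intros n; pose proof (qpoch_pos q Hq q n (proj2 Hq)).
    rewrite Wmass_qexp; unfold qexp_term.
    rewrite Rpow_mult_distr, <- !pow_mult, Nat.mul_comm; field; repeat split; lra. }
  apply (is_series_ext _ _ _ Hterm).
  replace (qpoch (1 - m) q k) with (/ qexp q (1 - m) * qexp q (q ^ k * (1 - m)))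
    by (rewrite qexp_qpow_shift by (exact Hq || lra); field; lra).
  exact (is_series_scal_l _ _ _ (is_series_qexp q Hq (q ^ k * (1 - m)) ltac:(nra))).
Qed.

Lemma is_series_Wmass_total : is_series (fun n => Wmass q m n) 1.
Proof.
  apply (is_series_ext _ _ _ (fun n => Rmult_1_r (Wmass q m n))).
  exact (is_series_Wmass_qpow_moment 0).
Qed.

Lemma is_series_Wmass_mean : is_series (fun n => Wmass q m n * q ^ n) m.
Proof.
  apply (is_series_ext _ _ _ (fun n => f_equal (Rmult (Wmass q m n)) (pow_1 (q ^ n)))).
  pose proof (is_series_Wmass_qpow_moment 1) as H.
  replace (qpoch (1 - m) q 1) with m in H by (simpl; ring); exact H.
Qed.

Lemma is_series_Wmass_variance :
  is_series (fun n => Wmass q m n * (q ^ n - m) ^ 2) ((1 - q) * m * (1 - m)).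
Proof.
  pose proof (is_series_plus _ _ _ _
    (is_series_minus _ _ _ _ (is_series_Wmass_qpow_moment 2)
       (is_series_scal_l (2 * m) _ _ (is_series_Wmass_qpow_moment 1)))
    (is_series_scal_l (m ^ 2) _ _ (is_series_Wmass_qpow_moment 0))) as H.
  assert (Hterm : forall n : nat,
    Wmass q m n * (q ^ n) ^ 2 - 2 * m * (Wmass q m n * (q ^ n) ^ 1)
      + m ^ 2 * (Wmass q m n * (q ^ n) ^ 0) = Wmass q m n * (q ^ n - m) ^ 2)
    by (intros n; ring).
  replace ((1 - q) * m * (1 - m)) with
    (qpoch (1 - m) q 2 - 2 * m * qpoch (1 - m) q 1 + m ^ 2 * qpoch (1 - m) q 0)
    by (simpl; ring).
  exact (is_series_ext _ _ _ Hterm H).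
Qed.

Lemma hahnD_w (n : nat) :
  hahnD q (fun m' => w q m' n) m = (q ^ n - m) / ((1 - q) * m * (1 - m)) * w q m n.
Proof.
  pose proof (qexp_ge1 q Hq (1 - m) ltac:(lra)); pose proof (pow_q_bounds q Hq n).
  assert (Hm' : 0 < q * m + 1 - q < 1) by nra.
  unfold hahnD; rewrite !w_qexp by assumption.
  replace (1 - (q * m + 1 - q)) with (q * (1 - m)) by ring.
  rewrite qexp_q_shift by (exact Hq || lra).
  replace (q * (1 - m) / q) with (1 - m) by (field; repeat split; lra).
  unfold Rdiv; rewrite !Rpow_mult_distr, !pow_inv; field; repeat split; lra.
Qed.

End WMeasure.

Theorem mainTheorem16 (q m : R) (hq : 0 < q < 1) (hm : 0 < m < 1) :
  (forall n : nat, 0 <= Wmass q m n) /\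
  is_series (fun n => Wmass q m n) 1 /\
  is_series (fun n => Wmass q m n * q ^ n) m /\
  is_series (fun n => Wmass q m n * (q ^ n - m) ^ 2) ((1 - q) * m * (1 - m)) /\
  (forall n : nat,
     hahnD q (fun m' => w q m' n) m
     = (q ^ n - m) / ((1 - q) * m * (1 - m)) * w q m n).
Proof.
  split; [|split; [|split; [|split]]].
  - apply Wmass_nonneg; assumption.
  - apply is_series_Wmass_total; assumption.
  - apply is_series_Wmass_mean; assumption.
  - apply is_series_Wmass_variance; assumption.
  - apply hahnD_w; assumption.
Qed.
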